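(* For every ranking profile $R$ over $m$ candidates, the ranking chosen by the Flow-adjusting Borda rule is pair-priceable for $R$. This holds for any choice of maximum flow in each round (the minimization of the cost-per-utility ratio is not needed) and any tie-breaking among Borda maximizers.
   Context: Let $C$ be a set of $m$ candidates. A ranking is a strict linear order over $C$; $\mathcal{R}$ denotes the set of all rankings over $C$. A ranking profile is a function $R:\mathcal{R}\to[0,1]$ with $\sum_\succ R(\succ)=1$. For a ranking $\succ$, $A(\succ)=\{(x,y)\in C\times C:x\succ y\}$. For $x\in X\subseteq C$, $u(\succ,x,X)=|\{y\in X\setminus\{x\}:x\succ y\}|$; for $b:\mathcal{R}\to\mathbb{R}_{\geq0}$, $U(b,x,X)=\sum_\succ b(\succ)u(\succ,x,X)$. Flow-adjusting Borda rule: set $X_1=C$, $b_1(\succ)=R(\succ)\binom{m}{2}$. In round $i=1,\dots,m$: choose $x^*\in\arg\max_{x\in X_i}U(b_i,x,X_i)$, place it at position $i$, set $X_{i+1}=X_i\setminus\{x^*\}$. Build the flow network $G_{x^*}$ with vertices: source $s$, a vertex $v_\succ$ for each $\succ\in\mathcal{R}$, a vertex $v_y$ for each $y\in X_i\setminus\{x^*\}$, sink $t$; edges $(s,v_\succ)$ with capacity $b_i(\succ)$; edges $(v_\succ,v_y)$ with unbounded capacity whenever $x^*\succ y$; edges $(v_y,t)$ with capacity $1$. Let $f$ be a maximum $s$-$t$ flow in $G_{x^*}$ (the rule's default choice is one minimizing $\max_{\succ}\frac{f(s,v_\succ)}{b_i(\succ)u(\succ,x^*,X_i)}$ with $0/0=0$),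 and set $b_{i+1}(\succ)=b_i(\succ)-f(s,v_\succ)$. A ranking $\rhd=x_1,\dots,x_m$ is pair-priceable for $R$ if there is $\pi:\mathcal{R}\times A(\rhd)\to[0,1]$ such that (1) $\pi(\succ,(x_i,x_j))\leq u(\succ,x_i,\{x_i,x_j\})$ for all $\succ$ and $(x_i,x_j)\in A(\rhd)$; (2) $\sum_{(x_i,x_j)\in A(\rhd)}\pi(\succ,(x_i,x_j))\leq\binom{m}{2}R(\succ)$ for all $\succ$; (3) $\sum_\succ\pi(\succ,(x_i,x_j))\leq1$ for all $(x_i,x_j)\in A(\rhd)$; (4) $\sum_\succ\sum_{(x_i,x_j)\in A(\rhd)}\pi(\succ,(x_i,x_j))>\binom{m}{2}-1$. *)

From mathcomp Require Import all_boot all_order all_algebra all_fingroup.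
Set Implicit Arguments. Unset Strict Implicit. Unset Printing Implicit Defensive.
Import Order.TTheory GRing.Theory Num.Theory.
Local Open Scope ring_scope.

(* A ranking is encoded as a permutation
   s : {perm 'I_m}, where s x is the position of candidate x
   (position 0 = top).  x is preferred to y in s iff s x < s y.
   This is a bijection between {perm 'I_m} and strict linear orders on C. *)


Definition prefers m (s : {perm 'I_m}) (x y : 'I_m) : bool := (s x < s y)%N.

Definition is_profile (F : realFieldType) m (P : {perm 'I_m} -> F) : Prop :=
  (forall s, 0 <= P s) /\ \sum_(s : {perm 'I_m}) P s = 1.

Definition util m (s : {perm 'I_m}) (x : 'I_m) (X : {set 'I_m}) : nat :=
  #|[set y in X | (y != x) && prefers s x y]|.

Definition Util (F : realFieldType) m (b : {perm 'I_m} -> F) (x : 'I_m)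
  (X : {set 'I_m}) : F :=
  \sum_(s : {perm 'I_m}) b s * (util s x X)%:R.

(* An s-t flow in the network G_x (candidate set X, budgets b), described by
   its values g s y on the middle edges (v_s, v_y).  Flow on (s, v_s) is
   \sum_y g s y and on (v_y, t) is \sum_s g s y (flow conservation). *)
Definition is_flow (F : realFieldType) m (X : {set 'I_m}) (x : 'I_m)
  (b : {perm 'I_m} -> F) (g : {perm 'I_m} -> 'I_m -> F) : Prop :=
  [/\ (forall s y, 0 <= g s y),
      (forall s y, ~~ [&& y \in X, y != x & prefers s x y] -> g s y = 0),
      (forall s, \sum_(y : 'I_m) g s y <= b s)
    & (forall y, \sum_(s : {perm 'I_m}) g s y <= 1)].

Definition flow_value (F : realFieldType) m (g : {perm 'I_m} -> 'I_m -> F) : F :=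
  \sum_(s : {perm 'I_m}) \sum_(y : 'I_m) g s y.

Definition is_max_flow (F : realFieldType) m (X : {set 'I_m}) (x : 'I_m)
  (b : {perm 'I_m} -> F) (g : {perm 'I_m} -> 'I_m -> F) : Prop :=
  is_flow X x b g /\
  (forall g', is_flow X x b g' -> flow_value g' <= flow_value g).

(* remaining candidates X_i (rounds indexed from 0): those not yet placed *)
Definition remaining m (xs : 'I_m -> 'I_m) (i : nat) : {set 'I_m} :=
  [set y | [forall k : 'I_m, (k < i)%N ==> (xs k != y)]].

(* A run of the Flow-adjusting Borda rule on profile P, with arbitrary
   tie-breaking and arbitrary maximum flows: xs i is the candidate put at
   position i (0-based), b i the budgets b_{i+1} of the paper, g i the
   maximum flow chosen in round i. *)
Definition FAB_run (F : realFieldType) m (P : {perm 'I_m} -> F)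
  (xs : 'I_m -> 'I_m) (b : nat -> {perm 'I_m} -> F)
  (g : nat -> {perm 'I_m} -> 'I_m -> F) : Prop :=
  (forall s, b 0%N s = P s * ('C(m, 2))%:R) /\
  forall i : 'I_m,
    [/\ xs i \in remaining xs i,
        (forall y, y \in remaining xs i ->
           Util (b i) y (remaining xs i) <= Util (b i) (xs i) (remaining xs i)),
        is_max_flow (remaining xs i) (xs i) (b i) (g i)
      & (forall s, b i.+1 s = b i s - \sum_(y : 'I_m) g i s y)].

(* Pair-priceability of the ranking rk (rk x = position of x).
   A(rk) = pairs (x, y) with x ranked above y in rk. *)
Definition pair_priceable (F : realFieldType) m (P : {perm 'I_m} -> F)
  (rk : {perm 'I_m}) : Prop :=
  exists pi : {perm 'I_m} -> 'I_m -> 'I_m -> F,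
    [/\ (forall s x y, prefers rk x y -> 0 <= pi s x y <= 1),
        (forall s x y, prefers rk x y ->
           pi s x y <= (util s x [set x; y])%:R),
        (forall s, \sum_(x : 'I_m) \sum_(y : 'I_m | prefers rk x y) pi s x y
                     <= ('C(m, 2))%:R * P s),
        (forall x y, prefers rk x y -> \sum_(s : {perm 'I_m}) pi s x y <= 1)
      & \sum_(s : {perm 'I_m}) \sum_(x : 'I_m) \sum_(y : 'I_m | prefers rk x y)
            pi s x y > ('C(m, 2))%:R - 1].

(* Price the pair (x, y) at the flow sent from voter s to y in the round where
   x is placed.  The individual constraints of pair-priceability are then the
   capacity constraints of the networks, and the total reduces to the invariant
   that before round j the voters hold less than C(m - j, 2) + 1 in budget.
   A round either routes |X| - 1 units, which preserves the invariant since
   C(n, 2) - (n - 1) = C(n - 1, 2), or has a cut formed by the candidates not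
   reachable in the residual network.  Maximality saturates the reachable
   candidates, every voter on the source side ranks the Borda winner x below all
   unreachable candidates, and comparing their Borda scores with that of x
   bounds the budget left on the source side by |X| - 1. *)

From mathcomp Require Import all_boot all_order all_algebra all_fingroup.
From mathcomp Require Import lra zify.
Import Order.TTheory GRing.Theory Num.Theory.
Local Open Scope ring_scope.
Set Implicit Arguments. Unset Strict Implicit. Unset Printing Implicit Defensive.

Lemma card_setIdE (T : finType) (Z : {set T}) (p : pred T) :
  #|[set y in Z | p y]| = (\sum_(y in Z) p y)%N.
Proof.
by rewrite -sum1dep_card big_mkcondr; apply: eq_bigr => y _; case: (p y).
Qed.

Lemma sum_if_eq (R : nmodType) (T : finType) (j : T) (a : R) :
  \sum_(i : T) (if i == j then a else 0) = a.
Proof. by rewrite -big_mkcond big_pred1_eq. Qed.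

Section Utility.

Variables (m : nat) (s : {perm 'I_m}).

Lemma prefers_irr x : ~~ prefers s x x.
Proof. by rewrite /prefers ltnn. Qed.

Lemma prefers_total x y : x != y -> prefers s x y || prefers s y x.
Proof.
by rewrite /prefers -(inj_eq (@perm_inj _ s)) -(inj_eq val_inj) neq_ltn.
Qed.

Lemma prefers_asym x y : prefers s x y -> ~~ prefers s y x.
Proof. by rewrite /prefers => /ltnW; rewrite leqNgt. Qed.

Lemma sum_util (Z : {set 'I_m}) :
  (2 * \sum_(z in Z) util s z Z = #|Z| * (#|Z| - 1))%N.
Proof.
rewrite /util; under eq_bigr do rewrite card_setIdE.
rewrite mul2n -addnn [X in (_ + X)%N]exchange_big -big_split -sum_nat_const /=.
apply: eq_bigr => z zZ; rewrite -big_split /=.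
have -> : (#|Z| - 1 = \sum_(y in Z) (y != z))%N.
  rewrite -card_setIdE (cardsD1 z Z) zZ add1n subn1.
  by apply: eq_card => y; rewrite !inE andbC.
apply: eq_bigr => y _; case: eqVneq => [-> | yz] /=; first by [].
case: (boolP (prefers s z y)) => szy.
  by rewrite (negbTE (prefers_asym szy)).
by move: (prefers_total yz); rewrite (negbTE szy) orbF => ->.
Qed.

Lemma util_subset (x : 'I_m) (Z X : {set 'I_m}) :
  Z \subset X -> (util s x Z <= util s x X)%N.
Proof.
move=> sZX; apply: subset_leq_card; apply/subsetP => y.
by rewrite !inE => /andP[/(subsetP sZX) -> ->].
Qed.

Lemma util_le_card (x : 'I_m) (X : {set 'I_m}) :
  x \in X -> (util s x X <= #|X| - 1)%N.
Proof.
move=> xX; rewrite (cardsD1 x X) xX add1n subn1.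
by apply: subset_leq_card; apply/subsetP => y; rewrite !inE => /and3P[-> -> _].
Qed.

Lemma util_pair_gt0 (x y : 'I_m) : prefers s x y -> (0 < util s x [set x; y])%N.
Proof.
move=> sxy; rewrite card_gt0; apply/set0Pn; exists y.
rewrite !inE eqxx orbT sxy andbT /=; apply: contraTneq sxy => ->.
exact: prefers_irr.
Qed.

Lemma sum_util_subset (Z X : {set 'I_m}) :
  Z \subset X -> (#|Z| * (#|Z| - 1) <= 2 * \sum_(z in Z) util s z X)%N.
Proof.
by move=> sZX; rewrite -sum_util leq_mul2l leq_sum // => z _; apply: util_subset.
Qed.

(* Each member of Z beats everything x beats in X, on top of what it beats
   inside Z. *)
Lemma sum_util_subset_bottom (Z X : {set 'I_m}) (x : 'I_m) :
  Z \subset X -> x \in Z ->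
  (forall y, y \in X -> y != x -> prefers s x y -> y \notin Z) ->
  (#|Z| * (#|Z| - 1) + 2 * (#|Z| * util s x X)
     <= 2 * \sum_(z in Z) util s z X)%N.
Proof.
move=> sZX xZ xZ_bottom; rewrite -sum_util -mulnDr leq_mul2l /=.
rewrite -sum_nat_const -big_split /=; apply: leq_sum => z zZ.
have zx : (s z <= s x)%N.
  rewrite leqNgt; apply/negP => sxz.
  have zx : z != x by apply: contraTneq sxz => ->; apply: prefers_irr.
  by have := xZ_bottom z (subsetP sZX z zZ) zx sxz; rewrite zZ.
rewrite /util -cardsUI.
have -> : [set y in Z | (y != z) && prefers s z y]
            :&: [set y in X | (y != x) && prefers s x y] = set0.
  apply/setP => y; rewrite !inE; apply/negP.
  move=> /andP[/andP[yZ _] /and3P[yX yx sxy]].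
  by have := xZ_bottom y yX yx sxy; rewrite yZ.
rewrite cards0 addn0; apply: subset_leq_card; apply/subsetP => y; rewrite !inE.
case/orP => [/andP[/(subsetP sZX) -> ->] // | /and3P[-> _ sxy]].
have szy : prefers s z y by apply: leq_ltn_trans zx sxy.
by rewrite szy andbT; apply: contraTneq szy => ->; apply: prefers_irr.
Qed.

End Utility.

Section Flows.

Variables (F : realFieldType) (m : nat) (X : {set 'I_m}) (x : 'I_m).
Variables (b : {perm 'I_m} -> F) (g : {perm 'I_m} -> 'I_m -> F).

Definition flow_arc (s : {perm 'I_m}) (y : 'I_m) :=
  [&& y \in X, y != x & prefers s x y].

Hypothesis g_flow : is_flow X x b g.

Lemma flow_ge0 s y : 0 <= g s y.
Proof. by case: g_flow. Qed.

Lemma flow_support s y : g s y != 0 -> flow_arc s y.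
Proof. by case: g_flow => _ g_arc _ _; apply: contraNT => /g_arc ->. Qed.

Lemma flow_le1 s y : g s y <= 1.
Proof.
case: g_flow => g0 _ _ g_col; apply: le_trans (g_col y).
by rewrite (bigD1 s) //= lerDl sumr_ge0.
Qed.

Lemma flow_le_util s y : g s y <= (util s x [set x; y])%:R.
Proof.
have [-> | /flow_support/and3P[_ _ sxy]] := eqVneq (g s y) 0; first exact: ler0n.
by rewrite (le_trans (flow_le1 s y)) // ler1n util_pair_gt0.
Qed.

(* g + h satisfies every flow constraint except possibly the capacity of
   (v_y, t), and sends strictly more into v_y than g does: the effect of pushing
   flow along a residual path s ~> v_y. *)
Definition augmenting (h : {perm 'I_m} -> 'I_m -> F) (y : 'I_m) : Prop :=
  [/\ forall s z, ~~ flow_arc s z -> h s z = 0,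
      forall s z, 0 <= g s z + h s z,
      forall s, \sum_z (g s z + h s z) <= b s,
      forall z, z != y -> \sum_s h s z = 0
    & 0 < \sum_s h s y].

Lemma augmenting_scale h y c : augmenting h y -> 0 <= c <= 1 ->
  (forall s z, 0 <= g s z + c * h s z) /\
  (forall s, \sum_z (g s z + c * h s z) <= b s).
Proof.
case: g_flow => g0 _ g_row _ [_ gh0 gh_row _ _] /andP[c0 c1]; split.
  by move=> s z; have := g0 s z; have := gh0 s z; nra.
move=> s; rewrite big_split /= -mulr_sumr.
by have := g_row s; have := gh_row s; rewrite big_split /=; nra.
Qed.

Lemma augmenting_start s y :
  \sum_z g s z < b s -> flow_arc s y -> exists h, augmenting h y.
Proof.
move=> slack sy; pose d := b s - \sum_z g s z.
have d_gt0 : 0 < d by rewrite subr_gt0.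
exists (fun s' z => if (s' == s) && (z == y) then d else 0); split.
- by move=> s' z; case: eqP => // ->; case: eqP => // ->; rewrite sy.
- move=> s' z; case: ifP => _; last by rewrite addr0 flow_ge0.
  by rewrite addr_ge0 ?flow_ge0 ?ltW.
- move=> s'; rewrite big_split /=; have [-> | _] := eqVneq s' s.
    by rewrite sum_if_eq /d addrC subrK.
  by rewrite [X in _ + X]big1 ?addr0 //; case: g_flow.
- by move=> z /negbTE zy; apply: big1 => s'; rewrite zy andbF.
- by rewrite (bigD1 s) //= !eqxx big1 ?addr0 // => s' /negbTE ->.
Qed.

(* Scale the augmentation towards y' by c and move the c * e units it brings
   to y' from the edge (v_s, v_y') to (v_s, v_y).  With c = g s y' / (e + g s y')
   that edge keeps g s y' + c * h s y' - c * e = c * (g s y' + h s y') >= 0. *)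
Lemma augmenting_extend s y y' :
  (exists h, augmenting h y') -> 0 < g s y' -> flow_arc s y ->
  exists h, augmenting h y.
Proof.
move=> [h hy']; have [h_arc gh0 _ h_col h_y'] := hy'.
move=> gsy' sy; have [-> | yy'] := eqVneq y y'; first by exists h.
have sy' : flow_arc s y' by apply: flow_support; rewrite gt_eqF.
set e := \sum_s0 h s0 y' in h_y'.
pose c := g s y' / (e + g s y'); pose d := c * e.
have c_gt0 : 0 < c by rewrite divr_gt0 // addr_gt0.
have cE : c * (e + g s y') = g s y' by rewrite divfK // gt_eqF // addr_gt0.
have c01 : 0 <= c <= 1 by rewrite ltW //= ler_pdivrMr ?addr_gt0 // mul1r lerDr ltW.
have [cg0 cg_row] := augmenting_scale hy' c01.
exists (fun s0 z => c * h s0 z + (if s0 == s then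
          (if z == y then d else 0) - (if z == y' then d else 0) else 0)); split.
- move=> s0 z z_arc; rewrite h_arc // mulr0 add0r; case: eqP => // s0s.
  rewrite s0s in z_arc.
  by rewrite ifN ?ifN ?subrr //; apply: contraNneq z_arc => ->.
- move=> s0 z; rewrite addrA; case: eqP => [-> | _]; last by rewrite addr0 cg0.
  case: eqP => [-> | _].
    by rewrite (negbTE yy') subr0 addr_ge0 ?cg0 // ltW // mulr_gt0.
  case: eqP => [-> | _]; last by rewrite subrr addr0 cg0.
  by rewrite add0r /d; have := gh0 s y'; nra.
- move=> s0; rewrite !big_split /= addrA; case: eqP => [-> | _].
    by rewrite sumrB !sum_if_eq subrr addr0 -big_split cg_row.
  by rewrite [X in _ + X]big1 // addr0 -big_split cg_row.
- move=> z zy; rewrite big_split /= -mulr_sumr sum_if_eq (negbTE zy) sub0r.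
  have [-> | zy'] := eqVneq z y'; first by rewrite subrr.
  by rewrite h_col // mulr0 subr0.
- rewrite big_split /= -mulr_sumr sum_if_eq eqxx (negbTE yy') subr0.
  by rewrite h_col // mulr0 add0r mulr_gt0.
Qed.

End Flows.

Section ResidualReachability.

Variables (F : realFieldType) (m : nat) (X : {set 'I_m}) (x : 'I_m).
Variables (b : {perm 'I_m} -> F) (g : {perm 'I_m} -> 'I_m -> F).

(* v_s is reachable in the residual network once (s, v_s) has residual
   capacity or some reachable v_y sends flow back to it. *)
Definition source_side (W : {set 'I_m}) (s : {perm 'I_m}) : bool :=
  (\sum_z g s z < b s) || [exists y in W, 0 < g s y].

Definition reach_step (W : {set 'I_m}) : {set 'I_m} :=
  [set y | [exists s, flow_arc X x s y && source_side W s]].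

Definition reachable : {set 'I_m} := fixset reach_step.

Lemma reach_step_mono : {homo reach_step : W W' / W \subset W'}.
Proof.
move=> W W' sWW'; apply/subsetP => y; rewrite !inE.
move=> /existsP[s /andP[sy sideW]]; apply/existsP; exists s; rewrite sy /=.
case/orP: sideW => [slack | /existsP[z /andP[zW gsz]]].
  by rewrite /source_side slack.
by apply/orP; right; apply/existsP; exists z; rewrite (subsetP sWW').
Qed.

Lemma mem_reachable y :
  (y \in reachable) = [exists s, flow_arc X x s y && source_side reachable s].
Proof. by rewrite /reachable -{1}(fixsetK reach_step_mono) inE. Qed.

Lemma source_side_arc s y :
  source_side reachable s -> flow_arc X x s y -> y \in reachable.
Proof.
by move=> side sy; rewrite mem_reachable; apply/existsP; exists s; rewrite sy.
Qed.

Lemma reachable_arc y : y \in reachable -> (y \in X) && (y != x).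
Proof. by rewrite mem_reachable => /existsP[s /andP[/and3P[-> -> _] _]]. Qed.

Hypothesis g_flow : is_flow X x b g.

Lemma reachable_augmenting y :
  y \in reachable -> exists h, augmenting X x b g h y.
Proof.
rewrite /reachable /fixset; elim: #|_| y => [|k IHk] y /=; first by rewrite inE.
rewrite inE => /existsP[s /andP[sy /orP[slack | /existsP[y' /andP[y'k gsy']]]]].
  exact: augmenting_start slack sy.
exact: augmenting_extend (IHk y' y'k) gsy' sy.
Qed.

Hypothesis g_max : forall g', is_flow X x b g' -> flow_value g' <= flow_value g.

Lemma reachable_saturated y : y \in reachable -> \sum_s g s y = 1.
Proof.
case/reachable_augmenting => h hy; have [h_arc _ _ h_col h_y] := hy.
case: g_flow => _ g_arc _ g_col.
apply/eqP; rewrite eq_le g_col /= leNgt; apply/negP => lt1.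
set e := \sum_s h s y in h_y; pose r := 1 - \sum_s g s y.
have r_gt0 : 0 < r by rewrite subr_gt0.
pose c := r / (e + r); have er_gt0 : 0 < e + r by rewrite addr_gt0.
have c_gt0 : 0 < c by rewrite divr_gt0.
have c01 : 0 <= c <= 1 by rewrite ltW //= ler_pdivrMr // mul1r lerDr ltW.
have ce_le : c * e <= r by rewrite mulrAC ler_pdivrMr // ler_pM2l // lerDl ltW.
have [cg0 cg_row] := augmenting_scale g_flow hy c01.
have g'_flow : is_flow X x b (fun s z => g s z + c * h s z).
  split => // [s z z_arc | z]; first by rewrite g_arc // h_arc // mulr0 addr0.
  rewrite big_split /= -mulr_sumr; have [-> | zy] := eqVneq z y.
    by rewrite -lerBrDl.
  by rewrite h_col // mulr0 addr0.
have := g_max g'_flow; rewrite /flow_value.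
have -> : \sum_s \sum_z (g s z + c * h s z) = \sum_s \sum_z g s z + c * e.
  have -> : e = \sum_z \sum_s h s z.
    by rewrite (bigD1 y) //= [X in _ + X]big1 ?addr0 // => z /h_col.
  rewrite [X in _ + c * X]exchange_big mulr_sumr -big_split /=.
  by apply: eq_bigr => s _; rewrite big_split /= -mulr_sumr.
by rewrite gerDl leNgt mulr_gt0.
Qed.

Lemma sink_side_full s : ~~ source_side reachable s -> \sum_z g s z = b s.
Proof.
case: g_flow => _ _ g_row _; rewrite negb_or => /andP[full _].
by apply/eqP; rewrite eq_le g_row leNgt.
Qed.

Lemma sink_side_reachable s y :
  ~~ source_side reachable s -> y \in reachable -> g s y = 0.
Proof.
rewrite negb_or => /andP[_ /existsPn /(_ y)] + yW; rewrite yW /= -leNgt => le0.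
by apply/eqP; rewrite eq_le le0 (flow_ge0 g_flow).
Qed.

Lemma source_side_flow :
  \sum_(s | source_side reachable s) \sum_y g s y = #|reachable|%:R.
Proof.
transitivity (\sum_(s | source_side reachable s) \sum_(y in reachable) g s y).
  apply: eq_bigr => s side; rewrite [RHS]big_mkcond; apply: eq_bigr => y _.
  case: ifPn => // yW; apply/eqP; apply: contraNT yW => /(flow_support g_flow).
  exact: source_side_arc.
rewrite exchange_big -sumr_const; apply: eq_bigr => y yW.
rewrite -(reachable_saturated yW) [RHS](bigID (source_side reachable)) /=.
by rewrite [X in _ = _ + X]big1 ?addr0 // => s /sink_side_reachable ->.
Qed.

Lemma leftover_budget_cut :
  \sum_s (b s - \sum_y g s y) =
  \sum_(s | source_side reachable s) b s - #|reachable|%:R.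
Proof.
rewrite (bigID (source_side reachable)) /= [X in _ + X]big1.
  by rewrite addr0 sumrB source_side_flow.
by move=> s /sink_side_full ->; rewrite subrr.
Qed.

Lemma flow_value_cut :
  flow_value g = #|reachable|%:R + \sum_(s | ~~ source_side reachable s) b s.
Proof.
rewrite /flow_value (bigID (source_side reachable)) /= source_side_flow.
by congr (_ + _); apply: eq_bigr => s /sink_side_full.
Qed.

End ResidualReachability.

(* Sum over the voters the Borda scores of Z minus |Z| times that of x, which
   is <= 0: a voter of T contributes at least |Z|(|Z|-1), any other voter at
   least |Z|(|Z|-1) - 2|Z|(|X|-1). *)
Lemma borda_winner_bound (F : realFieldType) m (X Z : {set 'I_m}) (x : 'I_m)
    (b : {perm 'I_m} -> F) (T : pred {perm 'I_m}) :
  Z \subset X -> x \in Z -> (forall s, 0 <= b s) ->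
  (forall y, y \in X -> Util b y X <= Util b x X) ->
  (forall s y, T s -> y \in X -> y != x -> prefers s x y -> y \notin Z) ->
  (\sum_(s | T s) b s) * (#|Z|%:R - 1)
    <= (\sum_(s | ~~ T s) b s) * (2 * #|X|%:R - #|Z|%:R - 1).
Proof.
move=> sZX xZ b0 x_winner x_bottom.
set Q : F := #|Z|%:R; set N : F := #|X|%:R.
pose D s : F := 2 * (\sum_(z in Z) util s z X)%:R - 2 * Q * (util s x X)%:R.
have sum_D : \sum_s b s * D s <= 0.
  rewrite /D; under eq_bigr do rewrite mulrBr; rewrite sumrB subr_le0.
  have -> : \sum_s b s * (2 * Q * (util s x X)%:R) = 2 * (Q * Util b x X).
    by rewrite mulrA /Util mulr_sumr; apply: eq_bigr => s _; rewrite mulrCA.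
  have -> : \sum_s b s * (2 * (\sum_(z in Z) util s z X)%:R)
            = 2 * \sum_(z in Z) Util b z X.
    rewrite /Util exchange_big /= mulr_sumr; apply: eq_bigr => s _.
    by rewrite mulrCA natr_sum mulr_sumr.
  rewrite ler_pM2l // /Q mulr_natl -sumr_const.
  by apply: ler_sum => z /(subsetP sZX)/x_winner.
have Q_gt0 : 0 < Q by rewrite ltr0n card_gt0; apply/set0Pn; exists x.
have ZE : (#|Z| * (#|Z| - 1))%:R = Q * (Q - 1) :> F.
  by rewrite natrM natrB // card_gt0; apply/set0Pn; exists x.
have D_bottom s : T s -> Q * (Q - 1) <= D s.
  move=> Ts; have := sum_util_subset_bottom (s := s) sZX xZ (x_bottom s^~ Ts).
  by rewrite -(ler_nat F) natrD ZE !natrM /D -/Q; lra.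
have D_ge s : Q * (Q - 1) - 2 * Q * (N - 1) <= D s.
  have := sum_util_subset s sZX; rewrite -(ler_nat F) ZE natrM => ge.
  have := util_le_card s (subsetP sZX x xZ); rewrite -(ler_nat F) natrB; last first.
    by rewrite card_gt0; apply/set0Pn; exists x; apply: (subsetP sZX).
  rewrite /D -/N => le; nra.
have : (\sum_(s | T s) b s) * (Q * (Q - 1))
       + (\sum_(s | ~~ T s) b s) * (Q * (Q - 1) - 2 * Q * (N - 1)) <= 0.
  apply: le_trans sum_D; rewrite [leRHS](bigID T) /= !mulr_suml.
  by apply: lerD; apply: ler_sum => s Ts; apply: ler_wpM2l; rewrite ?D_bottom ?D_ge.
have beta0 : 0 <= \sum_(s | T s) b s by apply: sumr_ge0.
have gamma0 : 0 <= \sum_(s | ~~ T s) b s by apply: sumr_ge0.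
nra.
Qed.

Section Round.

Variables (F : realFieldType) (m : nat) (X : {set 'I_m}) (x : 'I_m).
Variables (b : {perm 'I_m} -> F) (g : {perm 'I_m} -> 'I_m -> F).
Hypotheses (xX : x \in X) (b_ge0 : forall s, 0 <= b s).
Hypothesis x_winner : forall y, y \in X -> Util b y X <= Util b x X.
Hypothesis g_max : is_max_flow X x b g.

Lemma leftover_lt_of_flow_lt : flow_value g < (#|X| - 1)%:R ->
  \sum_s (b s - \sum_y g s y) < (#|X| - 1)%:R.
Proof.
have [g_flow g_opt] := g_max.
set W := reachable X x b g; set T := source_side b g W.
set Z := X :\: W.
have sZX : Z \subset X by apply: subsetDl.
have xZ : x \in Z.
  by rewrite !inE xX andbT; apply/negP => /reachable_arc; rewrite eqxx andbF.
have cardX : #|X| = (#|Z| + #|W|)%N.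
  rewrite -(cardsID W X) addnC (setIidPr _) //.
  by apply/subsetP => y /reachable_arc/andP[].
have x_bottom s y : T s -> y \in X -> y != x -> prefers s x y -> y \notin Z.
  by move=> Ts yX yx sxy; rewrite !inE (source_side_arc Ts) //; apply/and3P.
have := borda_winner_bound sZX xZ b_ge0 x_winner x_bottom.
rewrite (leftover_budget_cut g_flow g_opt) (flow_value_cut g_flow g_opt).
rewrite -/W -/T cardX natrB ?addn_gt0 ?card_gt0 ?natrD; last first.
  by apply/orP; left; apply/set0Pn; exists x.
set beta := \sum_(s | T s) b s; set gamma := \sum_(s | ~~ T s) b s.
set Q : F := #|Z|%:R; set V : F := #|W|%:R.
have gamma0 : 0 <= gamma by apply: sumr_ge0.
have V0 : 0 <= V by apply: ler0n.
move=> borda flow_small; have Q1_gt0 : 0 < Q - 1 by lra.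
suff : beta * (Q - 1) < (Q + 2 * V - 1) * (Q - 1) by rewrite ltr_pM2r //; lra.
have pos : 0 < (Q - 1 - gamma) * (Q + 2 * V - 1) by rewrite mulr_gt0 //; lra.
by apply: le_lt_trans borda _; nra.
Qed.

Lemma leftover_bin2 : \sum_s b s < ('C(#|X|, 2))%:R + 1 ->
  \sum_s (b s - \sum_y g s y) < ('C(#|X|.-1, 2))%:R + 1.
Proof.
move=> budget.
have X_gt0 : (0 < #|X|)%N by rewrite card_gt0; apply/set0Pn; exists x.
have [small | large] := ltP (flow_value g) (#|X| - 1)%:R.
  apply: lt_le_trans (leftover_lt_of_flow_lt small) _.
  rewrite natr1 ler_nat subn1; case: #|X|.-1 => // n.
  by rewrite binS bin1; lia.
move: budget large; rewrite sumrB -/(flow_value g) -(prednK X_gt0) binS bin1.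
by rewrite subn1 natrD; lra.
Qed.

End Round.

Section FlowAdjustingBorda.

Variables (F : realFieldType) (m : nat) (P : {perm 'I_m} -> F).
Variables (xs : 'I_m -> 'I_m) (b : nat -> {perm 'I_m} -> F).
Variables (g : nat -> {perm 'I_m} -> 'I_m -> F) (rk : {perm 'I_m}).
Hypotheses (P_profile : is_profile P) (run : FAB_run P xs b g).
Hypothesis rk_xs : forall i, rk (xs i) = i.

Lemma xs_rk y : xs (rk y) = y.
Proof. by apply: (@perm_inj _ rk); rewrite rk_xs. Qed.

Lemma mem_remaining j y : (y \in remaining xs j) = (j <= rk y)%N.
Proof.
rewrite inE; apply/forallP/idP => [y_rem | le_j k].
  by rewrite leqNgt; apply/negP => lt; have := y_rem (rk y); rewrite lt xs_rk eqxx.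
by apply/implyP => kj; apply: contraTneq le_j => <-; rewrite rk_xs -ltnNge.
Qed.

Lemma remaining0 : remaining xs 0 = [set: 'I_m].
Proof. by apply/setP => y; rewrite mem_remaining inE. Qed.

Lemma remaining_m : remaining xs m = set0.
Proof. by apply/setP => y; rewrite mem_remaining inE leqNgt ltn_ord. Qed.

Lemma remainingS (i : 'I_m) : remaining xs i.+1 = remaining xs i :\ xs i.
Proof.
apply/setP => y; rewrite in_setD1 !mem_remaining ltn_neqAle; congr (_ && _).
by rewrite -(inj_eq (@perm_inj _ rk)) rk_xs eq_sym.
Qed.

Lemma round_flow (i : 'I_m) : is_flow (remaining xs i) (xs i) (b i) (g i).
Proof. by have [_ /(_ i)[_ _ []]] := run. Qed.

Lemma budget_bound j : (j <= m)%N ->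
  (forall s, 0 <= b j s) /\ \sum_s b j s < ('C(#|remaining xs j|, 2))%:R + 1.
Proof.
have [b0E rounds] := run; have [P_ge0 P_sum1] := P_profile.
elim: j => [_ | j IHj jm].
  split=> [s | ]; first by rewrite b0E mulr_ge0.
  rewrite remaining0 cardsT card_ord; under eq_bigr do rewrite b0E.
  by rewrite -mulr_suml P_sum1 mul1r ltrDl.
have [b_ge0 budget] := IHj (ltnW jm).
have [x_rem x_winner g_max bE] := rounds (Ordinal jm).
have [_ _ g_row _] := round_flow (Ordinal jm).
split=> [s | ]; first by rewrite bE subr_ge0.
under eq_bigr do rewrite bE.
rewrite (remainingS (Ordinal jm)).
have -> : #|remaining xs j :\ xs (Ordinal jm)| = #|remaining xs j|.-1.
  by rewrite [in RHS](cardsD1 (xs (Ordinal jm))) x_rem.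
exact: leftover_bin2 x_rem b_ge0 x_winner g_max budget.
Qed.

Lemma spent_budget s : \sum_(i < m) \sum_y g i s y = b 0%N s - b m s.
Proof.
have [_ rounds] := run.
rewrite (eq_bigr (fun i : 'I_m => - (b i.+1 s - b i s))) => [|i _]; last first.
  by have [_ _ _ ->] := rounds i; rewrite !opprB addrC subrK.
rewrite sumrN -(big_mkord xpredT (fun i => b i.+1 s - b i s)).
by rewrite telescope_sumr // opprB.
Qed.

Lemma round_flow_ranked (i : 'I_m) s y : g i s y != 0 -> prefers rk (xs i) y.
Proof.
case/(flow_support (round_flow i))/and3P => y_rem yx _.
rewrite /prefers rk_xs ltn_neqAle -mem_remaining y_rem andbT.
by apply: contraNneq yx => /val_inj ->; rewrite xs_rk.
Qed.

Lemma spent_ranked_pairs s :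
  \sum_x \sum_(y | prefers rk x y) g (rk x) s y = b 0%N s - b m s.
Proof.
rewrite -spent_budget [RHS](reindex_inj (@perm_inj _ rk)) /=; apply: eq_bigr => x _.
rewrite [RHS](bigID (prefers rk x)) /= [X in _ = _ + X]big1 ?addr0 // => y.
by apply: contraNeq => /round_flow_ranked; rewrite xs_rk.
Qed.

End FlowAdjustingBorda.

Theorem mainTheorem11 (F : realFieldType) (m : nat) (P : {perm 'I_m} -> F)
  (xs : 'I_m -> 'I_m) (b : nat -> {perm 'I_m} -> F)
  (g : nat -> {perm 'I_m} -> 'I_m -> F) :
  is_profile P -> FAB_run P xs b g ->
  forall rk : {perm 'I_m}, (forall i : 'I_m, rk (xs i) = i) ->
  pair_priceable P rk.
Proof.
move=> P_profile run rk rk_xs; have [[b0E _] [_ P_sum1]] := (run, P_profile).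
have [bm_ge0] := budget_bound P_profile run rk_xs (leqnn m).
rewrite (remaining_m rk_xs) cards0 bin0n add0r => bm_lt1.
have flow_x x := round_flow run (rk x).
have spent := spent_ranked_pairs run rk_xs.
exists (fun s x y => g (rk x) s y); split.
- by move=> s x y _; rewrite (flow_ge0 (flow_x x)) (flow_le1 (flow_x x)).
- by move=> s x y _; have := flow_le_util (flow_x x) s y; rewrite xs_rk.
- by move=> s; rewrite spent b0E mulrC gerBl bm_ge0.
- by move=> x y _; have [_ _ _] := flow_x x.
under eq_bigr do rewrite spent.
rewrite sumrB; under eq_bigr do rewrite b0E.
by rewrite -mulr_suml P_sum1 mul1r; lra.
Qed.
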